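(* Let $m\ge 2$ and let $B$ be a blocker in $CK(2m)$ such that $e=[2m-3,2m-2]\in B$ and $f=[2m-2,2m-1]\notin B$. Then $e$ is the only edge of $B$ having $2m-2$ or $2m-1$ as an endpoint.
   Context: $CK(2m)$ denotes the complete convex geometric graph whose vertices are the $2m$ vertices of a convex polygon, labelled cyclically $0,1,\dots,2m-1$, and whose edges are all straight segments between pairs of vertices. Two edges with four distinct endpoints cross iff their endpoints alternate in the cyclic order. A simple perfect matching (SPM) is a set of $m$ edges that are pairwise disjoint (no common endpoint and no crossing). A blocking set is a set of edges containing at least one edge of every SPM. A blocker is a blocking set with exactly $m$ edges. *)

From mathcomp Require Import all_boot.
Set Implicit Arguments. Unset Strict Implicit. Unset Printing Implicit Defensive.

(* Vertices of CK(2m) are 'I_(2m), labelled cyclically 0..2m-1 in convex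
   position.  An edge is a 2-element subset of the vertices. *)
Definition is_edge (n : nat) (e : {set 'I_n}) : bool := #|e| == 2.

(* Two edges cross iff they have four distinct endpoints that alternate in
   the cyclic order, i.e. (with a<b, c<d) a<c<b<d or c<a<d<b. *)
Definition cross (n : nat) (e f : {set 'I_n}) : bool :=
  [exists a : 'I_n, exists b : 'I_n, exists c : 'I_n, exists d : 'I_n,
    [&& e == [set a; b], f == [set c; d], a < b, c < d &
        ((a < c < b) && (b < d)) || ((c < a < d) && (d < b))]].

Definition edisj (n : nat) (e f : {set 'I_n}) : bool :=
  [disjoint e & f] && ~~ cross e f.

Definition is_spm (m : nat) (M : {set {set 'I_(2 * m)}}) : bool :=
  [&& [forall e in M, is_edge e], #|M| == m &
      [forall e in M, forall f in M, (e != f) ==> edisj e f]].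

Definition is_blocking (m : nat) (B : {set {set 'I_(2 * m)}}) : bool :=
  [forall e in B, is_edge e] &&
  [forall M : {set {set 'I_(2 * m)}}, is_spm M ==> (M :&: B != set0)].

Definition is_blocker (m : nat) (B : {set {set 'I_(2 * m)}}) : bool :=
  is_blocking B && (#|B| == m).

Definition nseg (m a b : nat) : {set 'I_(2 * m)} :=
  [set x : 'I_(2 * m) | (val x == a) || (val x == b)].

Definition has_end (m k : nat) (g : {set 'I_(2 * m)}) : bool :=
  [exists x in g, val x == k].

From mathcomp Require Import all_boot zify.
Set Implicit Arguments. Unset Strict Implicit. Unset Printing Implicit Defensive.

(* For each odd s < 2m-2 there is a simple perfect matching consisting of f and
   of non-crossing "fan" edges on the vertices below 2m-2 whose endpoint sums
   are congruent to s modulo 2m-2.  As f is not in B, the blocker B contains a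
   fan edge of each of these m-1 matchings, and these edges are distinct since
   their endpoint sums differ.  None of them is e or a g ending at 2m-2 or
   2m-1, so g <> e would give B at least m+1 edges. *)

Definition fan_partner (N s x : nat) : nat :=
  if x <= s then s - x else if x < N then N + s - x
  else if x == N then N.+1 else N.

Variant fan_partner_spec (N s x : nat) : nat -> Prop :=
  | FanPartnerLow of x <= s : fan_partner_spec N s x (s - x)
  | FanPartnerHigh of s < x & x < N : fan_partner_spec N s x (N + s - x)
  | FanPartnerTop of x = N : fan_partner_spec N s x N.+1
  | FanPartnerOut of N < x : fan_partner_spec N s x N.

Lemma fan_partnerP N s x : fan_partner_spec N s x (fan_partner N s x).
Proof.
rewrite /fan_partner; case: (leqP x s) => [|lt_sx]; first exact: FanPartnerLow.
case: (ltnP x N) => [|le_Nx]; first exact: FanPartnerHigh.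
case: eqP => [|/eqP neq_xN]; first exact: FanPartnerTop.
by apply: FanPartnerOut; rewrite ltn_neqAle eq_sym neq_xN.
Qed.

Lemma fan_partner_neq N s x : odd s -> ~~ odd N -> fan_partner N s x != x.
Proof. by case: fan_partnerP; lia. Qed.

Lemma fan_partner_noncrossing N s x y :
  x < y -> y < fan_partner N s x -> fan_partner N s x < fan_partner N s y -> False.
Proof. by case: (fan_partnerP N s y); case: (fan_partnerP N s x); lia. Qed.

Section FanPartner.
Variables N s : nat.
Hypothesis lt_sN : s < N.

Lemma fan_partner_lt x : x < N.+2 -> fan_partner N s x < N.+2.
Proof. by case: fan_partnerP; lia. Qed.

Lemma fan_partnerK x : x < N.+2 -> fan_partner N s (fan_partner N s x) = x.
Proof. by case: (fan_partnerP N s (fan_partner N s x)); case: (fan_partnerP N s x); lia. Qed.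

Lemma fan_partner_low x :
  x < N -> fan_partner N s x < N /\ (x + fan_partner N s x) %% N = s.
Proof.
case: fan_partnerP => [le_xs|lt_sx lt_xN||]; try lia; move=> _; split; try lia.
- by rewrite subnKC // modn_small.
- by rewrite addnBA ?addKn ?modnDl ?modn_small //; lia.
Qed.
End FanPartner.

Lemma mem_nseg m a b (z : 'I_(2 * m)) : (z \in nseg m a b) = (val z == a) || (val z == b).
Proof. by rewrite inE. Qed.

Lemma nsegC m a b : nseg m a b = nseg m b a.
Proof. by apply/setP => z; rewrite !inE orbC. Qed.

Lemma nseg_ord m a b (lt_a : a < 2 * m) (lt_b : b < 2 * m) :
  nseg m a b = [set Ordinal lt_a; Ordinal lt_b].
Proof. by apply/setP => z; rewrite !inE. Qed.

Lemma card_nseg m a b : a < 2 * m -> b < 2 * m -> a != b -> #|nseg m a b| = 2.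
Proof. by move=> lt_a lt_b neq_ab; rewrite (nseg_ord lt_a lt_b) cards2 -val_eqE /= neq_ab. Qed.

Lemma sum_nseg m a b : a < 2 * m -> b < 2 * m -> a != b ->
  \sum_(v in nseg m a b) val v = a + b.
Proof.
move=> lt_a lt_b neq_ab.
by rewrite (nseg_ord lt_a lt_b) big_setU1 ?big_set1 // inE -val_eqE.
Qed.

Definition involution_matching m (p : nat -> nat) : {set {set 'I_(2 * m)}} :=
  [set nseg m (val x) (p (val x)) | x : 'I_(2 * m)].

Section InvolutionMatching.
Variables (m : nat) (p : nat -> nat).
Hypothesis p_lt : forall x, x < 2 * m -> p x < 2 * m.
Hypothesis pK : forall x, x < 2 * m -> p (p x) = x.
Hypothesis p_neq : forall x, x < 2 * m -> p x != x.
Hypothesis p_noncrossing : forall x y, x < y -> y < p x -> p x < p y -> False.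

Local Notation M := (involution_matching m p).

Lemma nseg_partner (x z : 'I_(2 * m)) :
  z \in nseg m x (p x) -> nseg m x (p x) = nseg m z (p z).
Proof. by rewrite mem_nseg => /orP[] /eqP -> //; rewrite pK // nsegC. Qed.

Lemma involution_matching_partition : partition M [set: 'I_(2 * m)].
Proof.
apply/and3P; split.
- apply/eqP/setP => z; rewrite inE; apply/bigcupP; exists (nseg m z (p z)).
    exact: imset_f.
  by rewrite mem_nseg eqxx.
- apply/trivIsetP => _ _ /imsetP[x _ ->] /imsetP[y _ ->]; apply: contraNT.
  rewrite -setI_eq0 => /set0Pn[z]; rewrite inE => /andP[zx zy].
  by rewrite (nseg_partner zx) (nseg_partner zy).
- apply/negP => /imsetP[x _ /setP/(_ x)].
  by rewrite mem_nseg eqxx inE.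
Qed.

Lemma card_involution_matching (h : {set 'I_(2 * m)}) : h \in M -> #|h| = 2.
Proof.
case/imsetP=> x _ ->.
have lt_x := ltn_ord x.
by apply: card_nseg; rewrite ?p_lt // eq_sym p_neq.
Qed.

Lemma involution_matching_noncross (h h' : {set 'I_(2 * m)}) :
  h \in M -> h' \in M -> ~~ cross h h'.
Proof.
move=> /imsetP[x _ ->] /imsetP[y _ ->].
apply/negP => /existsP[a /existsP[b /existsP[c /existsP[d]]]].
case/and5P => /eqP hx /eqP hy lt_ab lt_cd hor.
have partner (u v w : 'I_(2 * m)) :
    nseg m u (p u) = [set v; w] -> v < w -> val w = p (val v).
  move=> huvw lt_vw; have vu : v \in nseg m u (p u) by rewrite huvw !inE eqxx.
  have : w \in nseg m v (p v) by rewrite -(nseg_partner vu) huvw !inE eqxx orbT.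
  by rewrite mem_nseg => /orP[] /eqP // eq_wv; rewrite eq_wv ltnn in lt_vw.
rewrite (partner _ _ _ hx lt_ab) (partner _ _ _ hy lt_cd) in hor.
by case/orP: hor => /andP[/andP[]] /p_noncrossing; apply.
Qed.

Lemma involution_matching_spm : is_spm M.
Proof.
apply/and3P; split.
- by apply/forall_inP => h /card_involution_matching; rewrite /is_edge => ->.
- have := card_uniform_partition card_involution_matching involution_matching_partition.
  rewrite cardsT card_ord => card2m.
  by rewrite -(eqn_pmul2r (_ : 0 < 2)) // -card2m mulnC.
- apply/forall_inP => h hM; apply/forall_inP => h' h'M; apply/implyP => neq.
  rewrite /edisj involution_matching_noncross // andbT.
  by case/and3P: involution_matching_partition => _ /trivIsetP disjM _; apply: disjM.
Qed.
End InvolutionMatching.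

Definition vertex_sum n (h : {set 'I_n}) : nat := \sum_(v in h) val v.

Section FanMatching.
Variables m s : nat.
Hypotheses (odd_s : odd s) (lt_s : s < 2 * m - 2).
Local Notation N := (2 * m - 2).
Local Notation fan := (involution_matching m (fan_partner N s)).

Lemma fan_matching_spm : is_spm fan.
Proof.
apply: involution_matching_spm => [x lt_x|x lt_x|x _|x y].
- by have := @fan_partner_lt _ _ lt_s x; lia.
- by apply: (fan_partnerK lt_s); lia.
- by apply: fan_partner_neq => //; lia.
- exact: fan_partner_noncrossing.
Qed.

Lemma fan_matching_edge h : h \in fan ->
  h = nseg m N (2 * m - 1) \/
  (forall w, w \in h -> val w < N) /\ vertex_sum h %% N = s.
Proof.
case/imsetP => -[x lt_x] _ ->; rewrite /=.
case: (ltnP x N) => [lt_xN | le_Nx].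
  have [lt_px sum_x] := fan_partner_low lt_s lt_xN.
  right; split; first by move=> w; rewrite mem_nseg => /orP[] /eqP ->.
  have lt_p : fan_partner N s x < 2 * m by lia.
  have neq_xp : x != fan_partner N s x by rewrite eq_sym fan_partner_neq //; lia.
  by rewrite /vertex_sum sum_nseg.
left; case: (fan_partnerP N s x); try lia; move=> eq_xN.
  by congr nseg; lia.
by rewrite nsegC; congr nseg; lia.
Qed.
End FanMatching.

Lemma blocker_meets_spm m (B M : {set {set 'I_(2 * m)}}) :
  is_blocker B -> is_spm M -> M :&: B != set0.
Proof. by case/andP => /andP[_ /forallP blk] _; apply/implyP/blk. Qed.

Lemma blocker_low_edges m (B : {set {set 'I_(2 * m)}}) :
  is_blocker B -> nseg m (2 * m - 2) (2 * m - 1) \notin B ->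
  m - 1 <= #|[set h in B | [forall w in h, val w < 2 * m - 2]]|.
Proof.
move=> blkB fB; set L := [set h in B | _].
have fan_edge (j : 'I_(m - 1)) :
    exists2 h, h \in L & vertex_sum h %% (2 * m - 2) = 2 * j + 1.
  have odd_s : odd (2 * j + 1) by lia.
  have lt_s : 2 * j + 1 < 2 * m - 2 by have := ltn_ord j; lia.
  have /set0Pn[h] := blocker_meets_spm blkB (fan_matching_spm odd_s lt_s).
  rewrite inE => /andP[hfan hB].
  case: (fan_matching_edge odd_s lt_s hfan) => [eq_hf | [low_h sum_h]].
    by rewrite -eq_hf hB in fB.
  by exists h; rewrite // inE hB; apply/forall_inP.
have [F FL sumF] := fin_all_exists2 fan_edge.
have F_inj : injective F.
  by move=> i j eqF; apply: ord_inj; have := sumF i; rewrite eqF sumF; lia.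
rewrite -[m - 1]card_ord -cardsT -(card_imset _ F_inj).
by apply: subset_leq_card; apply/subsetP => _ /imsetP[j _ ->].
Qed.

Lemma has_end_nseg m a b : b < 2 * m -> has_end b (nseg m a b).
Proof. by move=> lt_b; apply/existsP; exists (Ordinal lt_b); rewrite mem_nseg eqxx orbT. Qed.

Lemma has_end_lt m k n (h : {set 'I_(2 * m)}) :
  has_end k h -> [forall w in h, val w < n] -> k < n.
Proof. by case/existsP => w /andP[wh /eqP <-] /forall_inP; apply. Qed.

Theorem corollary3p5 (m : nat) (hm : 2 <= m) (B : {set {set 'I_(2 * m)}})
  (hB : is_blocker B)
  (he : nseg m (2 * m - 3) (2 * m - 2) \in B)
  (hf : nseg m (2 * m - 2) (2 * m - 1) \notin B) :
  forall g, g \in B ->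
    has_end (2 * m - 2) g || has_end (2 * m - 1) g ->
    g = nseg m (2 * m - 3) (2 * m - 2).
Proof.
move=> g gB end_g; apply/eqP; apply: contraT => neq_ge.
set e := nseg m (2 * m - 3) (2 * m - 2) in he neq_ge *.
set L := [set h in B | [forall w in h, val w < 2 * m - 2]].
have top_notin_L k h : 2 * m - 2 <= k -> has_end k h -> h \notin L.
  move=> le_k end_h; rewrite inE; apply/negP => /andP[_ low_h].
  by have := has_end_lt end_h low_h; lia.
have sub_L : L \subset B :\: [set e; g].
  apply/subsetP => h hL; have hB' : h \in B by move: hL; rewrite inE => /andP[].
  rewrite !inE negb_or hB' andbT.
  apply/andP; split; apply: contraTneq hL => ->.
    by apply: (top_notin_L (2 * m - 2)) => //; apply: has_end_nseg; lia.
  by case/orP: end_g; apply: top_notin_L; lia.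
have := leq_trans (blocker_low_edges hB hf) (subset_leq_card sub_L).
rewrite cardsD (setIidPr _) ?cards2 1?eq_sym ?neq_ge; last first.
  by apply/subsetP => h; rewrite !inE => /orP[] /eqP ->.
by case/andP: hB => _ /eqP ->; lia.
Qed.
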